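(* Let $\{(X_n,d_n,\nu_n)\}_n$ be a Lévy family of metric measure spaces. Suppose there exist random walks $m_n:X_n\to\mathcal{P}_1(X_n)$, $x\mapsto (m_n)_x$, and a constant $\kappa_0\in\mathbb{R}$ such that $\kappa^{m_n}_1(x,y)\ge\kappa_0$ for all $n$ and all distinct $x,y\in X_n$. Then $\{(\mathcal{P}_1(X_n),W_1,(\tilde m_n)_{\nu_n})\}_n$ is also a Lévy family, where $(\tilde m_n)_{\nu_n}$ is the push-forward of $\nu_n$ under $x\mapsto (m_n)_x$.
   Context: A metric measure space $(X,d,\mu)$ is a complete separable metric space with a Borel probability measure. $\mathcal{P}_1(X)$ is the set of Borel probability measures with finite first moment, with the $L^1$-Wasserstein distance $W_1(\mu,\nu)=\inf_\pi\int d\,d\pi$ over couplings $\pi$ of $\mu,\nu$. The $1$-coarse Ricci curvature of a random walk $m$ is $\kappa^m_1(x,y)=1-W_1(m_x,m_y)/d(x,y)$. For a Borel probability measure $\mu$ on $\mathbb{R}$ and $\kappa\in(0,1)$, the partial diameter is $\mathrm{Diam}(\mu,1-\kappa)=\inf\{\mathrm{Diam}(A): A\subset\mathbb{R}\text{ Borel},\ \mu(A)\ge1-\kappa\}$. Set $\mathrm{ObsDiam}(X;-\kappa)=\sup\{\mathrm{Diam}(f_*\mu,1-\kappa): f:X\to\mathbb{R}\ 1\text{-Lipschitz}\}$ and $\mathrm{ObsDiam}(X)=\inf_{\kappa\in(0,1)}\max\{\mathrm{ObsDiam}(X;-\kappa),\kappa\}$. A sequence of metric measure spaces $X_n$ is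 a Lévy family if $\mathrm{ObsDiam}(X_n)\to0$. *)

From HB Require Import structures.
From mathcomp Require Import all_boot all_order all_algebra.
From mathcomp Require Import all_classical all_reals all_analysis measurable_realfun.
Set Implicit Arguments. Unset Strict Implicit. Unset Printing Implicit Defensive.
Import Order.TTheory GRing.Theory Num.Theory.
Import numFieldNormedType.Exports.
Local Open Scope classical_set_scope.
Local Open Scope ring_scope.

Section MMSpace.
Variable R : realType.

Section Metric.
Variables (T : Type) (dist : T -> T -> R).

Definition is_metric : Prop :=
  [/\ forall x y, dist x y = 0 <-> x = y,
      forall x y, dist x y = dist y x &
      forall x y z, dist x z <= dist x y + dist y z].

Definition dist_complete : Prop :=
  forall u : nat -> T,
    (forall e, 0 < e -> exists N, forall p q, (N <= p)%N -> (N <= q)%N ->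
        dist (u p) (u q) < e) ->
    exists l, forall e, 0 < e -> exists N, forall p, (N <= p)%N -> dist (u p) l < e.

Definition dist_separable : Prop :=
  exists s : nat -> T, forall x e, 0 < e -> exists k, dist x (s k) < e.

Definition dist_open (U : set T) : Prop :=
  forall x, U x -> exists r, 0 < r /\ [set y | dist x y < r] `<=` U.

Definition lipschitz1 (f : T -> R) : Prop :=
  forall x y, `|f x - f y| <= dist x y.
End Metric.

Definition mm_space (d : measure_display) (T : measurableType d)
    (dist : T -> T -> R) : Prop :=
  [/\ is_metric dist, dist_complete dist, dist_separable dist &
      (@measurable _ T) = <<s dist_open dist >>].

Definition push (S T : Type) (mu : set S -> \bar R) (f : S -> T) : set T -> \bar R :=
  fun A => mu (f @^-1` A).

(** Diameter of a subset of R (Diam of the empty set is 0). *)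
Definition diamR (A : set R) : \bar R :=
  ereal_sup ([set 0%:E] `|` [set (`|x - y|)%:E | x in A & y in A]).

Definition partial_diam (mu : set R -> \bar R) (alpha : R) : \bar R :=
  ereal_inf [set diamR A | A in [set A : set R | measurable A /\ (alpha%:E <= mu A)%E]].

Definition ObsDiam_k (S : Type) (dist : S -> S -> R) (mu : set S -> \bar R) (k : R)
  : \bar R :=
  ereal_sup [set partial_diam (push mu f) (1 - k) | f in [set f | lipschitz1 dist f]].

Definition ObsDiam (S : Type) (dist : S -> S -> R) (mu : set S -> \bar R) : \bar R :=
  ereal_inf [set Order.max (ObsDiam_k dist mu k) k%:E | k in [set k : R | 0 < k < 1]].

Definition Levy_family (od : nat -> \bar R) : Prop := od @ \oo --> 0%:E.

Section Wasserstein.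
Variables (d : measure_display) (T : measurableType d) (dist : T -> T -> R).

Definition finite_first_moment (mu : probability T R) : Prop :=
  exists x0 : T, (\int[mu]_x (dist x0 x)%:E < +oo)%E.

Definition P1 := {mu : probability T R | finite_first_moment mu}.

Definition coupling (mu nu : probability T R) (pi : probability (T * T)%type R) : Prop :=
  forall A : set T, measurable A ->
    pi (A `*` setT) = mu A /\ pi (setT `*` A) = nu A.

(** W_1(mu, nu) (finite on P_1, hence taken as a real number) *)
Definition W1 (mu nu : P1) : R :=
  fine (ereal_inf [set (\int[pi]_z (dist z.1 z.2)%:E)%E
                  | pi in [set pi | coupling (sval mu) (sval nu) pi]]).

Definition random_walk (m : T -> P1) : Prop :=
  forall A : set T, measurable A -> measurable_fun [set: T] (fun x => (sval (m x)) A).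

Definition ricci1 (m : T -> P1) (x y : T) : R := 1 - W1 (m x) (m y) / dist x y.
End Wasserstein.

End MMSpace.

(** The random walk transfers the curvature bound into a Lipschitz bound: for
    [x <> y], [kappa0 <= 1 - W1(m_x, m_y) / d(x, y)] says that [x |-> m_x] is
    [(1 - kappa0)]-Lipschitz, hence [c]-Lipschitz for [c = max 1 (1 - kappa0)].
    Pulling a 1-Lipschitz function on [P_1(X_n)] back along the walk and dividing
    by [c] gives a 1-Lipschitz function on [X_n], so
    [ObsDiam (P_1(X_n)) <= c * ObsDiam X_n] with [c] independent of [n], and the
    observable diameters of the image spaces are squeezed to 0. *)
From HB Require Import structures.
From mathcomp Require Import all_boot all_order all_algebra.
From mathcomp Require Import all_classical all_reals all_analysis measurable_realfun.
From mathcomp Require Import lra.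
Set Implicit Arguments. Unset Strict Implicit. Unset Printing Implicit Defensive.
Import Order.TTheory GRing.Theory Num.Theory.
Local Open Scope classical_set_scope.
Local Open Scope ring_scope.

Section PartialDiameter.
Variable R : realType.

Lemma diamR_ge0 (A : set R) : (0 <= diamR A)%E.
Proof. by apply: ereal_sup_ubound; left. Qed.

Lemma diamR_preimage_div (c : R) (A : set R) : 0 < c ->
  (diamR [set x | A (x / c)%R] <= c%:E * diamR A)%E.
Proof.
move=> c0; apply/ereal_supP => _ [->|[x Ax [z Az <-]]].
  by apply: mule_ge0; [rewrite lee_fin ltW | exact: diamR_ge0].
have -> : x - z = c * (x / c - z / c).
  by rewrite mulrBr (mulrC c (x / c)) (mulrC c (z / c)) !divfK // gt_eqF.
rewrite normrM gtr0_norm // EFinM lee_pmul2l ?lte_fin //.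
by apply: ereal_sup_ubound; right; exists (x / c) => //; exists (z / c).
Qed.

Lemma partial_diam_push_div (S : Type) (mu : set S -> \bar R) (g : S -> R) (c a : R) :
  0 < c ->
  (partial_diam (push mu g) a <= c%:E * partial_diam (push mu (fun x => (g x / c)%R)) a)%E.
Proof.
move=> c0; rewrite /partial_diam -ereal_inf_pZl //.
apply/ereal_infP => _ [_ [A [mA muA] <-] <-].
apply: ge_ereal_inf; exists (diamR [set x | A (x / c)]); last exact: diamR_preimage_div.
exists [set x | A (x / c)] => //; split => //.
by have := @mulrr_measurable R setT c^-1 measurableT A mA; rewrite setTI.
Qed.

End PartialDiameter.

Section LipschitzPushforward.
Variables (R : realType) (S T : Type) (distS : S -> S -> R) (distT : T -> T -> R).
Variables (mu : set S -> \bar R) (g : S -> T) (c : R).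
Hypothesis distS_refl : forall x, distS x x = 0.
Hypothesis c_gt0 : 0 < c.
Hypothesis g_lipschitz : forall x y, x <> y -> distT (g x) (g y) <= c * distS x y.

Lemma lipschitz1_comp_div (f : T -> R) :
  lipschitz1 distT f -> lipschitz1 distS (fun x => f (g x) / c).
Proof.
move=> f_lip x y; have [<-|xy] := pselect (x = y).
  by rewrite subrr normr0 distS_refl.
rewrite -mulrBl normrM [`|c^-1|]gtr0_norm ?invr_gt0 // ler_pdivrMr //.
by rewrite [_ * c]mulrC; exact: le_trans (f_lip (g x) (g y)) (g_lipschitz xy).
Qed.

Lemma ObsDiam_k_push_le (k : R) :
  (ObsDiam_k distT (push mu g) k <= c%:E * ObsDiam_k distS mu k)%E.
Proof.
apply/ereal_supP => _ [f f_lip <-].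
apply: le_trans (partial_diam_push_div mu (fun x => f (g x)) (1 - k) c_gt0) _.
rewrite lee_pmul2l ?lte_fin //; apply: ereal_sup_ubound.
by exists (fun x => f (g x) / c) => //; exact: lipschitz1_comp_div.
Qed.

Hypothesis c_ge1 : 1 <= c.

(* The [k] in [max (ObsDiam_k k) k] is not scaled; [c >= 1] absorbs it. *)
Lemma ObsDiam_push_le :
  (ObsDiam distT (push mu g) <= c%:E * ObsDiam distS mu)%E.
Proof.
rewrite /ObsDiam -ereal_inf_pZl //.
apply/ereal_infP => _ [_ [k k01 <-] <-].
have k_le_M : (k%:E <= Order.max (ObsDiam_k distS mu k) k%:E)%E.
  by rewrite le_max lexx orbT.
apply: ge_ereal_inf; exists (Order.max (ObsDiam_k distT (push mu g) k) k%:E).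
  by exists k.
rewrite ge_max; apply/andP; split.
  apply: le_trans (ObsDiam_k_push_le k) _.
  by rewrite lee_pmul2l ?lte_fin // le_max lexx.
have M_ge0 : (0 <= Order.max (ObsDiam_k distS mu k) k%:E)%E.
  by apply: le_trans (k_le_M); rewrite lee_fin; case/andP: k01 => /ltW.
by apply: le_trans (k_le_M) (lee_pemull M_ge0 _); rewrite lee_fin.
Qed.

End LipschitzPushforward.

Lemma ObsDiam_ge0 (R : realType) (S : Type) (dist : S -> S -> R) (mu : set S -> \bar R) :
  (0 <= ObsDiam dist mu)%E.
Proof.
apply/ereal_infP => _ [k /andP[k_gt0 _] <-].
by rewrite le_max lee_fin (ltW k_gt0) orbT.
Qed.

Lemma Levy_family_le_scale (R : realType) (od od' : nat -> \bar R) (c : R) :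
  (forall n, 0 <= od' n <= c%:E * od n)%E ->
  Levy_family od -> Levy_family od'.
Proof.
move=> od'_bound od_cvg.
apply: (squeeze_cvge (f := fun=> 0%E) (h := fun n => c%:E * od n)%E).
- exact: nearW.
- exact: cvg_cst.
- by have := cvgeZl (y := c%:E) isT od_cvg; rewrite mule0.
Qed.

Lemma metric_refl (R : realType) (T : Type) (dist : T -> T -> R) :
  is_metric dist -> forall x, dist x x = 0.
Proof. by case=> dist_eq0 _ _ x; apply/dist_eq0. Qed.

Lemma metric_gt0 (R : realType) (T : Type) (dist : T -> T -> R) :
  is_metric dist -> forall x y, x <> y -> 0 < dist x y.
Proof.
move=> dist_metric x y xy; have [dist_eq0 dist_sym dist_tri] := dist_metric.
have := dist_tri x y x; rewrite (dist_sym y x) metric_refl // => dist_ge0.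
rewrite lt_def; apply/andP; split; last lra.
by apply/eqP => /dist_eq0.
Qed.

Lemma W1_le_of_ricci1_ge (R : realType) (d : measure_display) (T : measurableType d)
    (dist : T -> T -> R) (m : T -> P1 dist) (kappa0 : R) (x y : T) :
  is_metric dist -> x <> y -> kappa0 <= ricci1 m x y ->
  W1 (m x) (m y) <= (1 - kappa0) * dist x y.
Proof.
move=> dist_metric xy; rewrite /ricci1 lerBrDr -lerBrDl => W1_div_le.
by rewrite -ler_pdivrMr // (metric_gt0 dist_metric xy).
Qed.

Theorem theorem1p5 (R : realType) (dX : nat -> measure_display)
  (X : forall n, measurableType (dX n)) (dist : forall n, X n -> X n -> R)
  (nu : forall n, probability (X n) R)
  (m : forall n, X n -> P1 (dist n)) (kappa0 : R) :
  (forall n, mm_space (dist n)) ->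
  Levy_family (fun n => ObsDiam (dist n) (nu n)) ->
  (forall n, random_walk (m n)) ->
  (forall n (x y : X n), x <> y -> kappa0 <= ricci1 (m n) x y) ->
  Levy_family (fun n => ObsDiam (@W1 R _ (X n) (dist n)) (push (nu n) (m n))).
Proof.
move=> mm levy _ ricci_ge.
set c := Num.max 1 (1 - kappa0).
have c_ge1 : 1 <= c by rewrite le_max lexx.
have c_gt0 : 0 < c by apply: lt_le_trans c_ge1.
apply: (Levy_family_le_scale (c := c) _ levy) => n.
have [dist_metric _ _ _] := mm n.
rewrite ObsDiam_ge0 /=; apply: ObsDiam_push_le => //.
- exact: metric_refl.
- move=> x y xy; apply: le_trans (W1_le_of_ricci1_ge dist_metric xy (ricci_ge n x y xy)) _.
  by rewrite ler_wpM2r ?(ltW (metric_gt0 dist_metric xy)) // /c le_max lexx orbT.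
Qed.
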